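(* Let $M$ be a finite abelian group of even order and exponent greater than $2$, written as $M=C_{2i_1}\times\cdots\times C_{2i_s}\times M_1$ with $|M_1|$ odd, $s\geq 1$, $i_j\geq1$. Let $H=\{x\in M: x^2=1\}$, $\mathcal{A}=\{F^+_{(f',f'',1,1)}: f'\in\mathrm{Aut}(K), f''\in\mathrm{Aut}(M)\}$ and $\mathcal{B}=\{F^+_{(I_K,I_M,x,y)}: x,y\in H\}$. Then (a) $\mathcal{B}\cong H\times H\cong C_2^{2s}$; (b) $\mathcal{B}$ is a normal subgroup of $\mathrm{Aut}(L_M)$; (c) $\mathrm{Aut}(L_M)/\mathcal{B}\cong\mathcal{A}$.
   Context: $C_n$ denotes the cyclic group of order $n$. Let $K=\{1,a,b,c\}$ be the Klein four-group. Set $L_M=K\times M$ with the operation $(A,x)*(B,y)=(AB,xy)$ if $B=1$, and $(A,x)*(B,y)=(AB,x^{-1}y)$ if $B\neq 1$. For $u,v\in M$ with $u^2=v^2=1$, $\alpha_{(u,v)}:K\to M$ is defined by $\alpha_{(u,v)}(1)=1$, $\alpha_{(u,v)}(a)=u$, $\alpha_{(u,v)}(b)=v$, $\alpha_{(u,v)}(c)=uv$. For $f'\in\mathrm{Aut}(K)$, $f''\in\mathrm{Aut}(M)$ define $F^+_{(f',f'',u,v)}(A,x)=(f'(A),f''(x)\alpha_{(u,v)}(A))$. $I_K$, $I_M$ are the identity maps of $K$, $M$. $\mathcal{A}$ and $\mathcal{B}$ are subgroups of $\mathrm{Aut}(L_M)$ under composition. *)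

From mathcomp Require Import all_boot all_fingroup all_algebra all_solvable.
Set Implicit Arguments. Unset Strict Implicit. Unset Printing Implicit Defensive.
Local Open Scope group_scope.

(* Klein four-group K = C_2 x C_2 ; a = (1,0), b = (0,1), c = (1,1). *)
Definition Klein : finGroupType := ('Z_2 * 'Z_2)%type.

Section Loop.
Variable gT : finGroupType.

Definition Lcar := (Klein * gT)%type.

Definition Lmul (p q : Lcar) : Lcar :=
  if q.1 == 1 then (p.1 * q.1, p.2 * q.2) else (p.1 * q.1, p.2^-1 * q.2).

Definition AutL : {set {perm Lcar}} :=
  [set f : {perm Lcar} | [forall p, forall q, f (Lmul p q) == Lmul (f p) (f q)]].

(* alpha_(u,v) : 1 |-> 1, a |-> u, b |-> v, c |-> uv *)
Definition alpha (u v : gT) (A : Klein) : gT := u ^+ (val A.1) * v ^+ (val A.2).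

Definition Fplus (f' : {perm Klein}) (f'' : {perm gT}) (u v : gT) (p : Lcar) : Lcar :=
  (f' p.1, f'' p.2 * alpha u v p.1).

Definition Hinv : {set gT} := [set x : gT | x ^+ 2 == 1].

Definition Aset : {set {perm Lcar}} :=
  [set g : {perm Lcar} | [exists f' in Aut [set: Klein], exists f'' in Aut [set: gT],
      [forall p, g p == Fplus f' f'' 1 1 p]]].

Definition Bset : {set {perm Lcar}} :=
  [set g : {perm Lcar} | [exists x in Hinv, exists y in Hinv,
      [forall p, g p == Fplus 1 1 x y p]]].
End Loop.

Definition C2pow (n : nat) : {set {dffun forall i : 'I_n, 'Z_2}} := [set: {dffun forall i : 'I_n, 'Z_2}].

From mathcomp Require Import all_boot all_fingroup all_algebra all_solvable.
Set Implicit Arguments. Unset Strict Implicit. Unset Printing Implicit Defensive.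
Local Open Scope group_scope.

(* An automorphism phi of L_M preserves M = {(1, x)}: (A, y)^2 = (1, 1) for
   A <> 1, so phi (1, x) lies in M whenever x^2 <> 1, and every element of M
   is a product of two such x.  Hence phi (A, x) = (g A, w A * f x) with
   g in Aut K, f in Aut M, and the multiplication rule forces w to be a
   homomorphism K -> H, i.e. w = alpha u v with u, v in H.  Thus
   Aut(L_M) = B A with B normal and B :&: A = 1, and B ~ H x H.  Finally
   |H| = 2^s: each even cyclic factor has exactly two solutions of x^2 = 1,
   and M_1 only the identity. *)

Definition ka : Klein := (@Ordinal 2 1 isT, @Ordinal 2 0 isT).
Definition kb : Klein := (@Ordinal 2 0 isT, @Ordinal 2 1 isT).

Lemma Klein_cases (A : Klein) : [|| A == 1, A == ka, A == kb | A == ka * kb].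
Proof. by case: A => -[[|[|n]] Hn] [[|[|m]] Hm]. Qed.

Lemma Klein_mulgg (A : Klein) : A * A = 1.
Proof. by apply/eqP; case: A => -[[|[|n]] Hn] [[|[|m]] Hm]. Qed.

Lemma Klein_split_nontrivial (A : Klein) :
  A != 1 -> exists2 B : Klein, B != 1 & A * B != 1.
Proof.
by case: A => -[[|[|n]] Hn] [[|[|m]] Hm] //= _; [exists ka | exists kb | exists ka].
Qed.

Lemma invg_sqr1 (gT : finGroupType) (x : gT) : x ^+ 2 = 1 -> x^-1 = x.
Proof. by move=> x2; rewrite -[x^-1]mulg1 -x2 expgS expg1 mulKg. Qed.

Lemma AutTP (T : finGroupType) (f : {perm T}) :
  reflect {morph f : x y / x * y} (f \in Aut [set: T]).
Proof.
apply: (iffP idP) => [/Aut_morphic/morphicP fM x y | fM]; first exact: fM.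
by rewrite inE; apply/andP; split; [apply/subsetP => x _; rewrite inE | apply/morphicP].
Qed.

Section Loop.
Variable gT : finGroupType.

Lemma Lmul_fst (p q : Lcar gT) : (Lmul p q).1 = p.1 * q.1.
Proof. by rewrite /Lmul; case: ifP. Qed.

Lemma LmulM (A : Klein) (x y : gT) : Lmul (A, x) (1, y) = (A, x * y).
Proof. by rewrite /Lmul /= mulg1. Qed.

Lemma LmulK (A B : Klein) : Lmul (A, 1) (B, 1) = (A * B, 1 : gT).
Proof. by rewrite /Lmul /=; case: ifP; rewrite ?invg1 mulg1. Qed.

Lemma Lmul_sqr (A : Klein) (x : gT) : A != 1 -> Lmul (A, x) (A, x) = (1, 1).
Proof. by move=> nA; rewrite /Lmul /= (negbTE nA) Klein_mulgg mulVg. Qed.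

Lemma AutLP (f : {perm Lcar gT}) :
  reflect (forall p q, f (Lmul p q) = Lmul (f p) (f q)) (f \in AutL gT).
Proof.
rewrite inE; apply: (iffP forallP) => [fM p q | fM p].
  exact/eqP/(forallP (fM p)).
by apply/forallP => q; rewrite fM.
Qed.

Lemma AutL_group_set : group_set (AutL gT).
Proof.
apply/group_setP; split; first by apply/AutLP => p q; rewrite !perm1.
by move=> f g /AutLP fM /AutLP gM; apply/AutLP => p q; rewrite !permM fM gM.
Qed.

Canonical AutL_group := Group AutL_group_set.

Lemma alpha1 (u v : gT) : alpha u v 1 = 1.
Proof. by rewrite /alpha /= !expg0 mulg1. Qed.

Lemma alpha11 A : alpha (1 : gT) 1 A = 1.
Proof. by rewrite /alpha !expg1n mulg1. Qed.

Lemma alpha_ka (u v : gT) : alpha u v ka = u.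
Proof. by rewrite /alpha /= expg1 expg0 mulg1. Qed.

Lemma alpha_kb (u v : gT) : alpha u v kb = v.
Proof. by rewrite /alpha /= expg1 expg0 mul1g. Qed.

Lemma Fplus_inj (f' : {perm Klein}) (f'' : {perm gT}) u v :
  injective (Fplus f' f'' u v).
Proof.
case=> A x [B y]; rewrite /Fplus /= => -[/perm_inj eAB]; subst B.
by move/mulIg/perm_inj => ->.
Qed.

Definition Fperm f' f'' u v := perm (@Fplus_inj f' f'' u v).

Lemma FpermE f' f'' u v p : Fperm f' f'' u v p = Fplus f' f'' u v p.
Proof. by rewrite permE. Qed.

Lemma AsetP (g : {perm Lcar gT}) :
  reflect (exists2 f', f' \in Aut [set: Klein] & exists2 f'', f'' \in Aut [set: gT] &
             forall p, g p = (f' p.1, f'' p.2))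
          (g \in Aset gT).
Proof.
have FplusE f' f'' p : Fplus f' f'' 1 1 p = (f' p.1, f'' p.2 : gT).
  by rewrite /Fplus alpha11 mulg1.
rewrite inE; apply: (iffP exists_inP) => [[f' Af' /exists_inP[f'' Af'' /forallP E]] |].
  by exists f' => //; exists f'' => // p; rewrite (eqP (E p)) FplusE.
case=> f' Af' [f'' Af'' E]; exists f' => //; apply/exists_inP; exists f'' => //.
by apply/forallP => p; rewrite E FplusE.
Qed.

Lemma Aset_group_set : group_set (Aset gT).
Proof.
apply/group_setP; split.
  apply/AsetP; exists 1; first exact: group1.
  by exists 1 => [|[A x]]; [exact: group1 | rewrite !perm1].
move=> f g /AsetP[f1 F1 [f2 F2 Ef]] /AsetP[g1 G1 [g2 G2 Eg]].
apply/AsetP; exists (f1 * g1); rewrite ?groupM //; exists (f2 * g2); rewrite ?groupM //.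
by move=> p; rewrite permM Ef Eg !permM.
Qed.

Canonical Aset_group := Group Aset_group_set.
End Loop.

Lemma C2pow_abelem n : 2.-abelem (C2pow n).
Proof.
apply/abelemP => //; split.
  by apply/centsP => x _ y _; apply/ffunP => i; rewrite !mulg_ffun Zp_mulgC.
move=> x _; apply/ffunP => i; rewrite expgS expg1 mulg_ffun oneg_ffun.
by apply/eqP; case: (x i) => -[|[|]].
Qed.

Lemma exponent_gt2_sqr_neq1 (gT : finGroupType) :
  2 < exponent [set: gT] -> exists z : gT, z ^+ 2 != 1.
Proof.
move=> expG; apply/existsP; rewrite -negb_forall; apply: contraL expG => /forallP x2.
rewrite -leqNgt; apply: dvdn_leq => //; apply/exponentP => x _; exact/eqP.
Qed.

Section AbelianLoop.
Variable gT : finGroupType.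
Hypothesis cM : forall x y : gT, commute x y.
Hypothesis ex2 : exists z : gT, z ^+ 2 != 1.

Lemma commute_mulgACA (a b c d : gT) : a * b * (c * d) = c * a * (b * d).
Proof. by rewrite (cM c a) -!mulgA; congr (_ * _); rewrite !mulgA (cM b c). Qed.

Lemma alphaM (u v : gT) A B : u ^+ 2 = 1 -> v ^+ 2 = 1 ->
  alpha u v (A * B) = alpha u v A * alpha u v B.
Proof.
move=> u2 v2; rewrite /alpha /= (expg_mod _ u2) (expg_mod _ v2) !expgD !mulgA.
by congr (_ * _); rewrite -!mulgA; congr (_ * _); apply: cM.
Qed.

Lemma alpha_sqr (u v : gT) A : u ^+ 2 = 1 -> v ^+ 2 = 1 -> alpha u v A ^+ 2 = 1.
Proof.
move=> u2 v2; rewrite /alpha expgMn; last exact: cM.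
by rewrite -!expgM !(mulnC _ 2) !expgM u2 v2 !expg1n mulg1.
Qed.

Lemma alpha_mul (x1 y1 x2 y2 : gT) A :
  alpha x1 y1 A * alpha x2 y2 A = alpha (x1 * x2) (y1 * y2) A.
Proof.
rewrite /alpha !expgMn; try exact: cM.
by rewrite commute_mulgACA (cM (x1 ^+ _)) -!mulgA (cM (y1 ^+ _)).
Qed.

Lemma FplusM (f' : {perm Klein}) (f'' : {perm gT}) u v :
  {morph f' : x y / x * y} -> {morph f'' : x y / x * y} ->
  u ^+ 2 = 1 -> v ^+ 2 = 1 ->
  forall p q,
  Fplus f' f'' u v (Lmul p q) = Lmul (Fplus f' f'' u v p) (Fplus f' f'' u v q).
Proof.
move=> f'M f''M u2 v2 [A x] [B y].
have f'1 : f' 1 = 1 by apply: (mulIg (f' 1)); rewrite -f'M !mul1g.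
have f''1 : f'' 1 = 1 by apply: (mulIg (f'' 1)); rewrite -f''M !mul1g.
have f''V z : f'' z^-1 = (f'' z)^-1.
  by apply/esym/eqP; rewrite eq_invg_mul -f''M mulgV f''1.
have f'eq1 : (f' B == 1) = (B == 1) by rewrite -{1}f'1 (inj_eq perm_inj).
rewrite /Lmul /Fplus /= f'eq1; case: eqP => [-> | _].
  by rewrite alpha1 f'M f''M alphaM // alpha1 !mulg1 -!mulgA (cM (f'' y)) /alpha !mulgA.
rewrite f'M f''M f''V alphaM // invMg (invg_sqr1 (alpha_sqr _ u2 v2)).
by rewrite commute_mulgACA.
Qed.

Lemma Fplus_AutL (g : {perm Lcar gT}) (f' : {perm Klein}) (f'' : {perm gT}) u v :
  {morph f' : x y / x * y} -> {morph f'' : x y / x * y} ->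
  u ^+ 2 = 1 -> v ^+ 2 = 1 -> (forall p, g p = Fplus f' f'' u v p) -> g \in AutL gT.
Proof. by move=> f'M f''M u2 v2 E; apply/AutLP => p q; rewrite !E FplusM. Qed.

Lemma Hinv_group_set : group_set (Hinv gT).
Proof.
apply/group_setP; split; first by rewrite inE expg1n.
by move=> x y; rewrite !inE => /eqP x2 /eqP y2; rewrite expgMn ?x2 ?y2 ?mulg1.
Qed.

Canonical Hinv_group := Group Hinv_group_set.

Section Decomposition.
Variable phi : {perm Lcar gT}.
Hypothesis phiM : forall p q, phi (Lmul p q) = Lmul (phi p) (phi q).

Lemma autL1 : phi (1, 1) = (1, 1).
Proof.
have := phiM (1, 1) (1, 1); rewrite LmulM mulg1.
case: (phi (1, 1)) => [A x]; rewrite /Lmul /=.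
case: eqP => [-> | nA]; last by rewrite Klein_mulgg; case=> A1; case: nA.
by rewrite mulg1 => -[] /(congr1 (fun y => x^-1 * y)); rewrite mulVg mulKg => <-.
Qed.

Lemma autL_M_of_sqr_neq1 x : x ^+ 2 != 1 -> (phi (1, x)).1 = 1.
Proof.
move=> x2; apply/eqP; apply: contraR x2 => nA.
have := phiM (1, x) (1, x); rewrite LmulM.
case: (phi (1, x)) nA => [A y] /= nA; rewrite Lmul_sqr // -autL1 => /perm_inj [].
by rewrite expgS expg1 => ->.
Qed.

(* An involution x is the product of x z and z^-1, both of order > 2. *)
Lemma autL_M x : (phi (1, x)).1 = 1.
Proof.
case: ex2 => z z2; have [x2 | x2] := eqVneq (x ^+ 2) 1; last exact: autL_M_of_sqr_neq1.
have zV2 : (z^-1) ^+ 2 != 1 by rewrite expgVn invg_eq1.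
have xz2 : (x * z) ^+ 2 != 1 by rewrite expgMn ?x2 ?mul1g.
by rewrite -[x](mulgK z) -LmulM phiM /Lmul !autL_M_of_sqr_neq1 //= mulg1.
Qed.

Definition autK A := (phi (A, 1)).1.
Definition autM x := (phi (1, x)).2.
Definition autW A := (phi (A, 1)).2.

Lemma autL_1x x : phi (1, x) = (1, autM x).
Proof. by rewrite /autM; have := autL_M x; case: (phi (1, x)) => A y /= ->. Qed.

Lemma autL_decomp A x : phi (A, x) = (autK A, autW A * autM x).
Proof.
rewrite -{1}[x]mul1g -LmulM phiM autL_1x /autK /autW.
by case: (phi (A, 1)) => ? ?; rewrite LmulM.
Qed.

Lemma autL_fst p : (phi p).1 = autK p.1.
Proof. by case: p => A x; rewrite autL_decomp. Qed.

Lemma autM1 : autM 1 = 1.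
Proof. by rewrite /autM autL1. Qed.

Lemma autMM x y : autM (x * y) = autM x * autM y.
Proof. by rewrite {1}/autM -LmulM phiM !autL_1x LmulM. Qed.

Lemma autM_inj : injective autM.
Proof. by move=> x y E; have := autL_1x x; rewrite E -autL_1x => /perm_inj [->]. Qed.

Lemma autM_surj z : exists y, autM y = z.
Proof. by exists (invF autM_inj z); rewrite f_invF. Qed.

Lemma autK1 : autK 1 = 1.
Proof. by rewrite /autK autL1. Qed.

Lemma autKM A B : autK (A * B) = autK A * autK B.
Proof. by rewrite {1}/autK -LmulK phiM Lmul_fst. Qed.

Lemma autK_eq1 A : (autK A == 1) = (A == 1).
Proof.
apply/eqP/eqP => [E | ->]; last exact: autK1.
have [y Ey] := autM_surj (autW A).
have := autL_decomp A 1; rewrite autM1 mulg1 E -Ey -autL_1x => /perm_inj.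
by case.
Qed.

Lemma autK_inj : injective autK.
Proof.
move=> A B E; have: autK (A * B) == 1 by rewrite autKM E Klein_mulgg.
by rewrite autK_eq1 => /eqP AB; rewrite -[B]mul1g -(Klein_mulgg A) -mulgA AB mulg1.
Qed.

Lemma autW1 : autW 1 = 1.
Proof. by rewrite /autW autL1. Qed.

Lemma autW_twisted A B : B != 1 -> autW (A * B) = (autW A)^-1 * autW B.
Proof.
move=> nB; rewrite {1}/autW -LmulK phiM !autL_decomp autM1 !mulg1 /Lmul /=.
by rewrite autK_eq1 (negbTE nB).
Qed.

Lemma autW_sqr A : autW A ^+ 2 = 1.
Proof.
have [-> | nA] := eqVneq A 1; first by rewrite autW1 expg1n.
have [B nB nAB] := Klein_split_nontrivial nA.
have E := autW_twisted A nAB.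
rewrite mulgA Klein_mulgg mul1g autW_twisted // mulgA in E.
have /mulIg V2 : 1 * autW B = (autW A)^-1 * (autW A)^-1 * autW B by rewrite mul1g.
by apply/eqP; rewrite -invg_eq1 -expgVn expgS expg1 -V2.
Qed.

Lemma autWM A B : autW (A * B) = autW A * autW B.
Proof.
have [-> | nB] := eqVneq B 1; first by rewrite autW1 !mulg1.
by rewrite autW_twisted // invg_sqr1 // autW_sqr.
Qed.

Lemma autW_alpha A : autW A = alpha (autW ka) (autW kb) A.
Proof.
rewrite /alpha; case/or4P: (Klein_cases A) => /eqP-> /=.
- by rewrite autW1 !expg0 mulg1.
- by rewrite expg1 expg0 mulg1.
- by rewrite expg1 expg0 mul1g.
- by rewrite autWM !expg1.
Qed.

End Decomposition.

Lemma BsetP (b : {perm Lcar gT}) :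
  reflect (exists2 u, u \in Hinv gT & exists2 v, v \in Hinv gT &
             forall p, b p = (p.1, p.2 * alpha u v p.1))
          (b \in Bset gT).
Proof.
have FplusE u v p : Fplus 1 1 u v p = (p.1, p.2 * alpha u v p.1).
  by rewrite /Fplus !perm1.
rewrite inE; apply: (iffP exists_inP) => [[u Hu /exists_inP[v Hv /forallP E]] |].
  by exists u => //; exists v => // p; rewrite (eqP (E p)) FplusE.
case=> u Hu [v Hv E]; exists u => //; apply/exists_inP; exists v => //.
by apply/forallP => p; rewrite E FplusE.
Qed.

Lemma Bset_group_set : group_set (Bset gT).
Proof.
apply/group_setP; split.
  apply/BsetP; exists 1; first exact: group1.
  by exists 1 => [|[A x]]; [exact: group1 | rewrite alpha11 mulg1 perm1].
move=> f g /BsetP[u1 U1 [v1 V1 Ef]] /BsetP[u2 U2 [v2 V2 Eg]].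
apply/BsetP; exists (u1 * u2); rewrite ?groupM //; exists (v1 * v2); rewrite ?groupM //.
by move=> p; rewrite permM Ef Eg /= -mulgA alpha_mul.
Qed.

Canonical Bset_group := Group Bset_group_set.

Lemma Bset_sub : Bset gT \subset AutL gT.
Proof.
apply/subsetP => b /BsetP[u]; rewrite inE => /eqP u2 [v]; rewrite inE => /eqP v2 E.
by apply: (@Fplus_AutL b 1 1 u v) => // [x y | x y | p]; rewrite ?E /Fplus !perm1.
Qed.

Lemma Aset_sub : Aset gT \subset AutL gT.
Proof.
apply/subsetP => a /AsetP[f' /AutTP f'M [f'' /AutTP f''M E]].
apply: (Fplus_AutL f'M f''M (expg1n _ _) (expg1n _ _)) => p.
by rewrite E /Fplus alpha11 mulg1.
Qed.

Lemma Bset_of_AutL_fixing (b : {perm Lcar gT}) : b \in AutL gT ->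
  (forall p, (b p).1 = p.1) -> (forall x, b (1, x) = (1, x)) -> b \in Bset gT.
Proof.
move=> /AutLP bM bK bM1; apply/BsetP.
exists (autW b ka); first by rewrite inE autW_sqr.
exists (autW b kb); first by rewrite inE autW_sqr.
case=> A x; rewrite autL_decomp //= (autW_alpha bM) cM.
by rewrite /autK bK /autM bM1.
Qed.

Lemma AutL_norm_Bset : AutL gT \subset 'N(Bset gT).
Proof.
apply/subsetP => phi Aphi; rewrite inE; apply/subsetP => _ /imsetP[b Bb ->].
have /AutLP phiM := Aphi; have [u _ [v _ Eb]] := BsetP _ Bb.
apply: Bset_of_AutL_fixing.
- by rewrite groupJ // (subsetP Bset_sub).
- by move=> p; rewrite conjgE !permM (autL_fst phiM) Eb /= -(autL_fst phiM) permKV.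
- move=> x; have [y <-] := autM_surj phiM x.
  by rewrite conjgE !permM -(autL_1x phiM) permK Eb /= alpha1 mulg1.
Qed.

Lemma Bset_Aset_TI : Bset gT :&: Aset gT = 1.
Proof.
apply/trivgP/subsetP => g /setIP[/BsetP[u _ [v _ Eb]] /AsetP[f' _ [f'' _ Ea]]].
rewrite inE; apply/eqP/permP => -[A x]; rewrite perm1 Ea /=.
have := Ea (A, 1); rewrite Eb /= => -[<- _].
by have := Ea (1, x); rewrite Eb /= alpha1 mulg1 => -[_ <-].
Qed.

Lemma Bset_Aset_mul : Bset gT * Aset gT = AutL gT.
Proof.
apply/eqP; rewrite eqEsubset mul_subG ?Bset_sub ?Aset_sub //=.
apply/subsetP => phi Aphi; have /AutLP phiM := Aphi.
pose gK := perm (autK_inj phiM); pose gM := perm (autM_inj phiM).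
pose a := Fperm gK gM 1 1.
have Ea p : a p = (autK phi p.1, autM phi p.2).
  by rewrite FpermE /Fplus alpha11 mulg1 !permE.
have Aa : a \in Aset gT.
  apply/AsetP; exists gK; [|exists gM; [|by move=> p; rewrite Ea !permE]].
    by apply: (introT (AutTP gK)) => A B; rewrite !permE autKM.
  by apply: (introT (AutTP gM)) => x y; rewrite !permE autMM.
rewrite -[phi](mulgKV a) mem_mulg //; apply: Bset_of_AutL_fixing.
- by rewrite groupM ?groupV // (subsetP Aset_sub).
- move=> p; rewrite permM; apply: (autK_inj phiM).
  by rewrite -[RHS](autL_fst phiM) -{2}(permKV a (phi p)) Ea.
- move=> x; have a1x : a (1, x) = phi (1, x) by rewrite Ea (autL_1x phiM) (autK1 phiM).
  by rewrite permM -a1x permK.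
Qed.

Lemma AutL_sdprod : Bset gT ><| Aset gT = AutL gT.
Proof.
rewrite sdprodE ?Bset_Aset_mul ?Bset_Aset_TI //.
exact: subset_trans Aset_sub AutL_norm_Bset.
Qed.

Lemma Bset_normal : Bset gT <| AutL gT.
Proof. by case/sdprod_context: AutL_sdprod. Qed.

Lemma AutL_quotient_Bset_isog : AutL gT / Bset gT \isog Aset gT.
Proof. by rewrite isog_sym; apply: sdprod_isog AutL_sdprod. Qed.

(* B is parametrised by the values (u, v) of its twist at a and b. *)
Lemma Bset_isog : Bset gT \isog setX (Hinv gT) (Hinv gT).
Proof.
pose h (b : {perm Lcar gT}) := ((b (ka, 1)).2, (b (kb, 1)).2).
have hE (b : {perm Lcar gT}) u v :
    (forall p, b p = (p.1, p.2 * alpha u v p.1)) -> h b = (u, v).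
  by move=> E; rewrite /h !E /= alpha_ka alpha_kb !mul1g.
have hM : morphic (Bset gT) h.
  apply/morphicP => b1 b2 /BsetP[u1 _ [v1 _ E1]] /BsetP[u2 _ [v2 _ E2]].
  rewrite (hE _ _ _ E1) (hE _ _ _ E2) (hE _ (u1 * u2) (v1 * v2)) // => p.
  by rewrite permM E1 E2 /= -mulgA alpha_mul.
apply/isogP; exists (morphm_morphism hM).
  apply/injmP => b1 b2 /BsetP[u1 _ [v1 _ E1]] /BsetP[u2 _ [v2 _ E2]].
  rewrite /= morphmE (hE _ _ _ E1) (hE _ _ _ E2) => -[eu ev].
  by apply/permP => p; rewrite E1 E2 eu ev.
rewrite morphimEdom; apply/setP => -[x y]; rewrite in_setX.
apply/imsetP/andP => [[b /BsetP[u Hu [v Hv E]]] | [Hx Hy]].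
  by rewrite /= morphmE (hE _ _ _ E) => -[-> ->].
have Fxy p : Fperm 1 1 x y p = (p.1, p.2 * alpha x y p.1).
  by rewrite FpermE /Fplus !perm1.
exists (Fperm 1 1 x y); first by apply/BsetP; exists x => //; exists y.
by rewrite /= morphmE (hE _ x y).
Qed.

Lemma card_dprod_Hinv (A B : {set gT}) (D : {group gT}) : A \x B = D ->
  #|D :&: Hinv gT| = (#|A :&: Hinv gT| * #|B :&: Hinv gT|)%N.
Proof.
move=> dAB; have [[GA GB -> ->] defD _ tiAB] := dprodP dAB.
have ti : (GA :&: Hinv gT) :&: (GB :&: Hinv gT) = 1.
  by apply/trivgP; rewrite -tiAB setISS ?subsetIl.
suff -> : D :&: Hinv gT = (GA :&: Hinv gT) * (GB :&: Hinv gT) by apply: TI_cardMg.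
have [sAD sBD] : GA \subset D /\ GB \subset D by rewrite -defD mulG_subl mulG_subr.
apply/eqP; rewrite eqEsubset mul_subG ?setSI // andbT.
apply/subsetP => x /setIP[]; rewrite -defD => /mulsgP[a b Aa Bb ->].
rewrite inE => /eqP ab2.
have a2 : a ^+ 2 = 1.
  suff: a ^+ 2 \in GA :&: GB by rewrite tiAB => /set1P.
  rewrite inE groupX //=.
  have -> : a ^+ 2 = (b ^+ 2)^-1.
    by apply/eqP; rewrite eq_sym eq_invg_mul -(expgMn _ (cM b a)) -(cM a b) ab2.
  by rewrite groupV groupX.
have b2 : b ^+ 2 = 1 by move: ab2; rewrite expgMn // a2 mul1g.
by rewrite mem_mulg // inE ?Aa ?Bb /= inE ?a2 ?b2.
Qed.

Lemma card_bigdprod_Hinv (I : Type) (r : seq I) (P : pred I) (F : I -> {set gT})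
    (D : {group gT}) :
  \big[dprod/1]_(j <- r | P j) F j = D ->
  #|D :&: Hinv gT| = (\prod_(j <- r | P j) #|F j :&: Hinv gT|)%N.
Proof.
elim: r D => [|j r IHr] D; rewrite ?big_nil ?big_cons.
  by move=> <-; rewrite (setIidPl (sub1G Hinv_group)) cards1.
case: (P j) => [dD | ]; last exact: IHr.
have [[_ G' _ defG'] _ _ _] := dprodP dD.
by rewrite (card_dprod_Hinv dD) defG' (IHr G' defG').
Qed.

Lemma card_cyclic_even_Hinv (C : {group gT}) :
  cyclic C -> ~~ odd #|C| -> #|C :&: Hinv gT| = 2.
Proof.
move=> cycC evC; have cycCH : cyclic (C :&: Hinv gT) by apply: cyclicS (subsetIl _ _) cycC.
have dvdCH2 : #|C :&: Hinv gT| %| 2.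
  rewrite -(exponent_cyclic cycCH); apply/exponentP => x.
  by rewrite !inE => /andP[_ /eqP].
have [|x Cx ox] := @Cauchy _ 2 C isT; first by rewrite dvdn2.
have CHx : x \in C :&: Hinv gT by rewrite inE Cx inE -{1}ox expg_order eqxx.
by apply/eqP; rewrite eqn_dvd dvdCH2 -ox order_dvdG.
Qed.

Lemma card_odd_Hinv (M : {group gT}) : odd #|M| -> #|M :&: Hinv gT| = 1%N.
Proof.
move=> oddM; suff -> : M :&: Hinv gT = [set 1] by rewrite cards1.
apply/setP => x.
rewrite !inE; apply/andP/eqP => [[Mx /eqP x2] | ->]; last by rewrite group1 expg1n.
have: #[x] %| gcdn 2 #|M| by rewrite dvdn_gcd order_dvdn x2 eqxx order_dvdG.
by have := coprime2n #|M|; rewrite oddM => /eqP ->; rewrite dvdn1 order_eq1 => /eqP.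
Qed.

Lemma card_Hinv s (C : 'I_s -> {group gT}) (M1 : {group gT}) :
  (forall j, cyclic (C j)) -> (forall j, ~~ odd #|C j|) -> odd #|M1| ->
  (\big[dprod/1]_(j < s) (C j : {set gT})) \x M1 = [set: gT] ->
  #|Hinv gT| = (2 ^ s)%N.
Proof.
move=> cycC evenC oddM1 dG; have [[G' _ defG' _] _ _ _] := dprodP dG.
rewrite -[Hinv gT]setTI (card_dprod_Hinv dG) (card_odd_Hinv oddM1) muln1 defG'.
rewrite (card_bigdprod_Hinv defG') (eq_bigr (fun=> 2)) ?prod_nat_const ?card_ord //.
by move=> j _; apply: card_cyclic_even_Hinv.
Qed.

Lemma setX_Hinv_abelem : 2.-abelem (setX (Hinv gT) (Hinv gT)).
Proof.
apply/abelemP => //; split.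
  by apply/centsP => x _ y _; congr (_, _); apply: cM.
case=> a b; rewrite !inE /= => /andP[/eqP a2 /eqP b2].
have -> : (a, b) ^+ 2 = (a ^+ 2, b ^+ 2) by [].
by rewrite a2 b2.
Qed.

Lemma setX_Hinv_isog_C2pow n :
  #|Hinv gT| = (2 ^ n)%N -> setX (Hinv gT) (Hinv gT) \isog C2pow (2 * n).
Proof.
move=> cardH; rewrite (isog_abelem_card _ setX_Hinv_abelem) C2pow_abelem /=.
by rewrite cardsT card_ffun !card_ord cardsX cardH -expnD addnn -mul2n.
Qed.

End AbelianLoop.

Theorem proposition5p8 (gT : finGroupType) (s : nat)
    (i : 'I_s -> nat) (C : 'I_s -> {group gT}) (M1 : {group gT}) :
  abelian [set: gT] ->
  ~~ odd #|[set: gT]| ->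
  2 < exponent [set: gT] ->
  (0 < s)%N ->
  (forall j, cyclic (C j) /\ #|C j| = (2 * i j)%N /\ (1 <= i j)%N) ->
  odd #|M1| ->
  (\big[dprod/1]_(j < s) (C j : {set gT})) \x M1 = [set: gT] ->
  [/\ Bset gT \isog setX (Hinv gT) (Hinv gT),
      setX (Hinv gT) (Hinv gT) \isog C2pow (2 * s),
      Bset gT <| AutL gT
    & AutL gT / Bset gT \isog Aset gT].
Proof.
move=> abG _ expG _ HC oddM1 dG.
have cM (x y : gT) : commute x y by apply: (centsP abG); rewrite inE.
have ex2 := exponent_gt2_sqr_neq1 expG.
have cardH : #|Hinv gT| = (2 ^ s)%N.
  apply: (card_Hinv cM) oddM1 dG => j; have [cycC [cardC _]] := HC j => //.
  by rewrite cardC oddM.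
split.
- exact: Bset_isog.
- exact: setX_Hinv_isog_C2pow.
- exact: Bset_normal.
- exact: AutL_quotient_Bset_isog.
Qed.
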